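(* Let $\mathcal{A}$ be a separating union-closed family with base set $[n]$ and height $h=4$, and let $\mathcal{B}=\{B_1,B_2,B_3,B_4\}$ be a choice of $\mathcal{B}(\mathcal{A})$ with $|\mathcal{B}|=4$. Then $|\mathrm{irr}_{\mathcal{B}}(B_i)|=1$ for each $i \in \{1,2,3,4\}$.
   Context: A family of sets $\mathcal{A}$ is union-closed if it is a finite family of distinct finite sets with at least one nonempty member set, and $X,Y\in\mathcal{A}$ implies $X\cup Y\in\mathcal{A}$ (the empty set may be a member). For a family $\mathcal{F}$, $b(\mathcal{F})=\bigcup_{F\in\mathcal{F}}F$; the base set $b(\mathcal{A})$ is denoted $[n]=\{1,\dots,n\}$. $\mathcal{A}$ is separating if for any two distinct $x,y\in[n]$ there is $A\in\mathcal{A}$ containing exactly one of $x,y$. A chain in $\mathcal{A}$ is a subfamily any two distinct members of which are comparable under proper inclusion; the height $h$ of $\mathcal{A}$ is the maximum size of a chain in $\mathcal{A}$. For real $x\ge 0$, $\mathcal{A}_{<x}=\{A\in\mathcal{A} : |A|<x\}$. For $\mathcal{S}\subseteq\mathcal{A}$ and $S\in\mathcal{S}$, $\mathrm{irr}_{\mathcal{S}}(S)=\{s\in S : s\notin b(\mathcal{S}\setminus\{S\})\}$, and $\mathcal{S}$ is irredundant if $\mathrm{irr}_{\mathcal{S}}(S)\neq\emptyset$ for every $S\in\mathcal{S}$. With $B=b(\mathcal{A}_{<n/2})$, $\mathcal{B}(\mathcal{A})$ denotes any irredundant subfamily of $\mathcal{A}_{<n/2}$ of minimum size such that $b(\mathcal{B}(\mathcal{A}))=B$.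 *)

From mathcomp Require Import all_boot.
Set Implicit Arguments. Unset Strict Implicit. Unset Printing Implicit Defensive.

(* Families of subsets of the base set [n], modelled as 'I_n = {0,...,n-1}. *)
Section Fam.
Variable n : nat.
Notation fam := {set {set 'I_n}}.

Definition famU (F : fam) : {set 'I_n} := \bigcup_(X in F) X.

Definition union_closed (A : fam) : Prop :=
  (exists2 X, X \in A & X != set0) /\
  (forall X Y, X \in A -> Y \in A -> X :|: Y \in A).

Definition separating (A : fam) : Prop :=
  forall x y : 'I_n, x != y ->
    exists2 X, X \in A & (x \in X) != (y \in X).

Definition is_chain (C : fam) : bool :=
  [forall X in C, [forall Y in C, (X \subset Y) || (Y \subset X)]].

Definition height (A : fam) : nat :=
  \max_(C in powerset A | is_chain C) #|C|.

(* A_{<x} with x = n/2 : members of size < n/2, i.e. 2|X| < n *)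
Definition small_half (A : fam) : fam := [set X in A | (2 * #|X| < n)%N].

Definition irr (S : fam) (X : {set 'I_n}) : {set 'I_n} :=
  X :\: famU (S :\ X).

Definition irredundant (S : fam) : Prop :=
  forall X, X \in S -> irr S X != set0.

Definition is_calB (A B : fam) : Prop :=
  [/\ B \subset small_half A,
      irredundant B,
      famU B = famU (small_half A) &
      forall C : fam, C \subset small_half A -> irredundant C ->
        famU C = famU (small_half A) -> (#|B| <= #|C|)%N].
End Fam.

From mathcomp Require Import all_boot.
Set Implicit Arguments. Unset Strict Implicit. Unset Printing Implicit Defensive.

(* If [irr B X] contained two points, a member [Z] of [A] separating them, and
   a member [W] of [A] covering the one outside [Z], would extend the unions of
   the other members of [B] to a chain: listing those members as
   [Y_1, ..., Y_(k-1)], each union [Y_1 :|: ... :|: Y_i] gains a point of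
   [irr B Y_i], then adding [Z] gains the point of [irr B X] inside [Z], and
   adding [W] gains the one outside it. Union-closure puts this chain of
   [#|B| + 1] sets in [A], so [height A > #|B|]; with [#|B| = height A = 4]
   this is impossible. *)

Section UnionChains.
Variable n : nat.
Implicit Types (A B S : {set {set 'I_n}}) (X Y Z : {set 'I_n}).
Implicit Types (s : seq {set 'I_n}).

Lemma irr_sub S X : irr S X \subset X.
Proof. exact: subsetDl. Qed.

Lemma notin_irr S X Y a : a \in irr S X -> Y \in S -> Y != X -> a \notin Y.
Proof.
rewrite inE => /andP [aU _] YS YX; apply: contra aU => aY.
by apply/bigcupP; exists Y; rewrite // !inE YX.
Qed.

Lemma irrS S S' X : S' \subset S -> irr S X \subset irr S' X.
Proof.
move=> sS'S; apply: setDS; apply/bigcupsP => Y; rewrite !inE => /andP [YX YS'].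
by apply: bigcup_sup; rewrite !inE YX (subsetP sS'S).
Qed.

Lemma irredundantD1 S X : irredundant S -> irredundant (S :\ X).
Proof.
move=> S_irr Y /setD1P [_ YS]; apply: contraNneq (S_irr Y YS) => irr0.
by rewrite -subset0 -irr0 irrS // subsetDl.
Qed.

Lemma sorted_proper_chain s :
  sorted (fun X Y => X \proper Y) s ->
  is_chain [set X in s] /\ #|[set X in s]| = size s.
Proof.
have proper_tr : transitive (fun X Y : {set 'I_n} => X \proper Y).
  by move=> Y X Z; apply: proper_trans.
move=> s_sorted; split; last first.
  rewrite cardsE; apply/card_uniqP; apply: sorted_uniq s_sorted => //.
  by move=> X; apply: negbTE (proper_irrefl X).
have s_pw : pairwise (fun X Y => X \proper Y) s by rewrite -sorted_pairwise.
apply/forallP => X; apply/implyP; rewrite inE => Xs.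
apply/forallP => Y; apply/implyP; rewrite inE => Ys.
elim: s s_pw Xs Ys {s_sorted} => [//|Z s IHs] /= /andP [/allP ltZ s_pw].
rewrite !inE => /orP [/eqP ->|Xs] /orP [/eqP ->|Ys].
- by rewrite subxx.
- by rewrite (proper_sub (ltZ _ Ys)).
- by rewrite (proper_sub (ltZ _ Xs)) orbT.
- exact: IHs.
Qed.

Lemma sorted_proper_size_le_height A s :
  all (mem A) s -> sorted (fun X Y => X \proper Y) s -> size s <= height A.
Proof.
move=> sA /sorted_proper_chain [s_chain <-].
apply: leq_bigmax_cond; rewrite s_chain andbT powersetE.
by apply/subsetP => X; rewrite inE => /(allP sA).
Qed.

Fixpoint unions_increase (U : {set 'I_n}) s : bool :=
  if s is Y :: s' then ~~ (Y \subset U) && unions_increase (U :|: Y) s'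
  else true.

Lemma unions_increase_cat U s1 s2 :
  unions_increase U (s1 ++ s2) =
  unions_increase U s1 && unions_increase (U :|: \bigcup_(Y <- s1) Y) s2.
Proof.
elim: s1 U => [|Y s1 IHs1] U /=; first by rewrite big_nil setU0.
by rewrite IHs1 big_cons setUA andbA.
Qed.

Lemma path_scanl_setU U s :
  unions_increase U s -> path (fun X Y => X \proper Y) U (scanl (@setU _) U s).
Proof.
elim: s U => [//|Y s IHs] U /= /andP [YU incr]; rewrite IHs // andbT.
by rewrite properUl.
Qed.

Lemma all_scanl_setU A U s :
  (forall X Y, X \in A -> Y \in A -> X :|: Y \in A) ->
  U \in A -> all (mem A) s -> all (mem A) (scanl (@setU _) U s).
Proof.
move=> UC; elim: s U => [//|Y s IHs] U /= UA /andP [YA sA].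
by rewrite UC //= IHs ?UC.
Qed.

Lemma unions_increase_size_le_height A s :
  (forall X Y, X \in A -> Y \in A -> X :|: Y \in A) ->
  all (mem A) s -> unions_increase set0 s -> size s <= height A.
Proof.
case: s => [//|Y s] UC /= /andP [YA sA] /andP [_ incr].
rewrite -(size_scanl (@setU _) (set0 :|: Y)).
apply: (@sorted_proper_size_le_height A (set0 :|: Y :: _)).
  by rewrite /= set0U YA all_scanl_setU.
exact: path_scanl_setU.
Qed.

Lemma unions_increase_irredundant S :
  irredundant S -> unions_increase set0 (enum S).
Proof.
move=> S_irr; have : uniq (enum S) := enum_uniq S.
have : forall Y, Y \in enum S -> exists2 a, a \in irr S Y & a \notin set0.
  move=> Y; rewrite mem_enum => /S_irr /set0Pn [a aY].
  by exists a; rewrite ?in_set0.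
have : {subset enum S <= S} by move=> Y; rewrite mem_enum.
elim: (enum S) set0 => [//|Y s IHs] U /= sS newpt /andP [Ys s_uniq].
apply/andP; split.
  have [a aY aU] := newpt Y (mem_head _ _).
  by apply: contra aU => /subsetP; apply; apply: subsetP (irr_sub _ _) _ aY.
have in_tail Z : Z \in s -> Z \in Y :: s by rewrite inE => ->; rewrite orbT.
apply: IHs => // [Z /in_tail/sS //|Z Zs].
have [a aZ aU] := newpt Z (in_tail Z Zs).
exists a; rewrite // inE negb_or aU (notin_irr aZ) ?sS ?mem_head //.
by apply: contraNneq Ys => ->.
Qed.

Lemma separating_split A (T : {set 'I_n}) :
  separating A -> 1 < #|T| ->
  exists Z u v, [/\ Z \in A, u \in T, v \in T, u \in Z & v \notin Z].
Proof.
move=> sepA /card_gt1P [x [y [xT yT xy]]].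
have [Z ZA] := sepA x y xy.
by case: (boolP (x \in Z)) => xZ; case: (boolP (y \in Z)) => yZ //= _;
  [exists Z, x, y | exists Z, y, x].
Qed.

Theorem card_lt_height_of_irr_gt1 A B X :
  (forall X Y, X \in A -> Y \in A -> X :|: Y \in A) ->
  famU A = [set: 'I_n] -> separating A ->
  B \subset A -> irredundant B -> X \in B -> 1 < #|irr B X| ->
  #|B| < height A.
Proof.
move=> UC coverA sepA BA irrB XB.
case/(separating_split sepA) => [Z [u [v [ZA uX vX uZ vZ]]]].
have [W WA vW] : exists2 W, W \in A & v \in W.
  by apply/bigcupP; rewrite -/(famU A) coverA inE.
set others := enum (B :\ X).
have notin_others a : a \in irr B X -> a \notin \bigcup_(Y <- others) Y.
  move=> aX; rewrite big_enum /=; apply/bigcupP => -[Y /setD1P [YX YB] aY].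
  by move: aY; apply/negP; apply: notin_irr aX YB YX.
have incr : unions_increase set0 (others ++ [:: Z; W]).
  have others_irr := irredundantD1 (X := X) irrB.
  rewrite unions_increase_cat (unions_increase_irredundant others_irr) /=.
  rewrite set0U andbT; apply/andP; split; apply/subsetPn.
    by exists u; last exact: notin_others.
  by exists v; rewrite // inE negb_or vZ andbT notin_others.
have sA : all (mem A) (others ++ [:: Z; W]).
  rewrite all_cat /= ZA WA !andbT; apply/allP => Y.
  by rewrite mem_enum => /setD1P [_ /(subsetP BA)].
have := unions_increase_size_le_height UC sA incr.
by rewrite size_cat /= -cardE (cardsD1 X B) XB addn2.
Qed.

End UnionChains.

Theorem propositionK (n : nat) (A B : {set {set 'I_n}}) :
  union_closed A ->
  famU A = [set: 'I_n] ->
  separating A ->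
  height A = 4 ->
  is_calB A B ->
  #|B| = 4 ->
  forall X, X \in B -> #|irr B X| = 1.
Proof.
move=> [_ UC] coverA sepA hA [BsmallA irrB _ _] cB X XB.
have BA : B \subset A.
  by apply: subset_trans BsmallA _; apply/subsetP => Y; rewrite inE => /andP [].
apply/eqP; rewrite eqn_leq card_gt0 irrB // andbT leqNgt; apply/negP => irr_gt1.
have := card_lt_height_of_irr_gt1 UC coverA sepA BA irrB XB irr_gt1.
by rewrite cB hA ltnn.
Qed.
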